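(* Let $A$ be a real $n\times n$ matrix acting on $H=\mathbb{R}^n$ (Euclidean inner product $\langle\cdot,\cdot\rangle$, norm $\|\cdot\|$) and let $\lambda$ be a real eigenvalue of $A$. Let $u_0\in\operatorname{Ker}(A-\lambda I)$ with $\|u_0\|=1$ and all components of $u_0$ nonzero, and let $\eta_0\in\mathbb{R}$ satisfy $$\langle |u_0|+\eta_0u_0,\,v\rangle=0\quad\text{for all } v\in\operatorname{Ker}(A^*-\lambda I).$$ Assume moreover the nondegeneracy condition: whenever $c\in\mathbb{R}$ and $w\in\operatorname{Ker}(A-\lambda I)$ satisfy $\langle u_0,w\rangle=0$ and $$Q\big(\Xi(u_0)w+\eta_0 w\big)+c\,Qu_0=0,$$ then $w=0$ and $c=0$. Then there exist a neighborhood $E$ of $0$ in $\mathbb{R}$ and continuous functions $\eta:E\to\mathbb{R}$, $u:E\to H$ with $u(0)=u_0$, $\eta(0)=\eta_0$, such that $$(A-\lambda I)u(\varepsilon)=\varepsilon\big(|u(\varepsilon)|+\eta(\varepsilon)u(\varepsilon)\big),\qquad \|u(\varepsilon)\|=1,\qquad \varepsilon\in E;$$ i.e. $\big(\lambda+\varepsilon(\eta(\varepsilon)+1),\ \lambda+\varepsilon(\eta(\varepsilon)-1)\big)$, $\varepsilon\in E$, describes a part of a Fučík curve of $A$ emanating from $(\lambda,\lambda)$ in the $\alpha\beta$-plane.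
   Context: $A^*$ is the transpose of $A$. $Q$ denotes the orthogonal projection of $\mathbb{R}^n$ onto $\operatorname{Ker}(A^*-\lambda I)$. For $u\in\mathbb{R}^n$, $|u|=[|u_1|,\dots,|u_n|]^t$ and $\Xi(u)=\operatorname{diag}(\operatorname{sgn}u_1,\dots,\operatorname{sgn}u_n)$. The Fučík spectrum of $A$ is the set of $(\alpha,\beta)\in\mathbb{R}^2$ for which $Au=\alpha u^+-\beta u^-$ has a nontrivial solution, where $u_i^+=\max\{u_i,0\}$, $u_i^-=\max\{-u_i,0\}$; with $\alpha=\varepsilon(\eta+1)+\lambda$, $\beta=\varepsilon(\eta-1)+\lambda$ this problem is equivalent to $(A-\lambda I)u=\varepsilon(|u|+\eta u)$. *)

From HB Require Import structures.
From mathcomp Require Import all_boot all_order all_algebra.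
From mathcomp Require Import all_classical all_reals all_analysis.
Set Implicit Arguments. Unset Strict Implicit. Unset Printing Implicit Defensive.
Import Order.TTheory GRing.Theory Num.Theory.
Local Open Scope ring_scope.

Definition dotv (R : realType) (n : nat) (u v : 'cV[R]_n) : R :=
  \sum_(i < n) u i 0 * v i 0.

Definition normv (R : realType) (n : nat) (u : 'cV[R]_n) : R :=
  Num.sqrt (dotv u u).

Definition absv (R : realType) (n : nat) (u : 'cV[R]_n) : 'cV[R]_n :=
  \col_i `|u i 0|.

Definition Xi (R : realType) (n : nat) (u : 'cV[R]_n) : 'M[R]_n :=
  diag_mx (\row_i Num.sg (u i 0)).

Definition in_ker_shift (R : realType) (n : nat) (M : 'M[R]_n) (lam : R)
  (v : 'cV[R]_n) : Prop := (M - lam%:M) *m v = 0.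

Definition is_orth_proj_ker (R : realType) (n : nat) (M : 'M[R]_n) (lam : R)
  (Q : 'cV[R]_n -> 'cV[R]_n) : Prop :=
  forall x, in_ker_shift M lam (Q x) /\
    (forall v, in_ker_shift M lam v -> dotv (x - Q x) v = 0).

(* Put u = u0 + x and eta = eta0 + c.  As long as |x_i| < |u0_i| for every i the
   modulus is linear, |u| = Xi(u0) u, so the equation (A - lam) u = eps (|u| + eta u)
   becomes a smooth perturbation of the eigenvalue problem.  Projecting with Q onto
   Ker(A^* - lam), imposing <u0, x> = 0 and using Q (|u0| + eta0 u0) = 0, it turns into a
   fixed-point equation y = T(eps, y) for y = (x, c) whose linear part is the bordered
   matrix [[A - lam + Q (Xi(u0) + eta0), Q u0], [u0^T, 0]]; the nondegeneracy condition
   says exactly that this matrix is invertible.  The other terms are quadratic in y or of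
   order eps, so T(eps, .) is a uniform contraction of a small ball for small eps and its
   fixed points depend Lipschitz-continuously on eps.  The equation being positively
   homogeneous in u, these solutions are finally normalised to ||u|| = 1. *)

From HB Require Import structures.
From mathcomp Require Import all_boot all_order all_algebra.
From mathcomp Require Import all_classical all_reals all_analysis.
From mathcomp Require Import ring lra.
Import Order.TTheory GRing.Theory Num.Theory numFieldNormedType.Exports.
Local Open Scope ring_scope.
Local Open Scope classical_set_scope.
Set Implicit Arguments. Unset Strict Implicit. Unset Printing Implicit Defensive.

Lemma lipschitz_continuous (R : realType) (V W : normedModType R) (f : V -> W) (k : R) :
  (forall a b, `|f a - f b| <= k * `|a - b|) -> continuous f.
Proof.
move=> fk x; apply/cvgrPdist_lt => e e0.
have ek0 : 0 < e / (`|k| + 1) by rewrite divr_gt0 // ltr_wpDl.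
near=> t; apply: le_lt_trans (fk x t) _.
have xt : `|x - t| < e / (`|k| + 1) by near: t; apply: cvgr_dist_lt ek0; exact: cvg_id.
apply: le_lt_trans (_ : (`|k| + 1) * `|x - t| < e).
  by rewrite ler_wpM2r // (le_trans (ler_norm k)) // lerDl.
by rewrite mulrC -ltr_pdivlMr // ltr_wpDl.
Unshelve. all: end_near.
Qed.

Definition clamp (R : realType) (d e : R) := Num.max (- d) (Num.min d e).

Lemma clamp_le (R : realType) (d e : R) : 0 <= d -> `|clamp d e| <= d.
Proof. by move=> d0; rewrite ler_norml le_max lexx ge_max ge_min lexx /= andbT; lra. Qed.

Lemma clamp_id (R : realType) (d e : R) : `|e| <= d -> clamp d e = e.
Proof. by rewrite ler_norml => /andP[de ed]; rewrite /clamp (min_idPr ed) (max_idPr de). Qed.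

Lemma clamp_lipschitz (R : realType) (d a b : R) : `|clamp d a - clamp d b| <= `|a - b|.
Proof.
have ab := ler_norm (a - b); have ba : b - a <= `|a - b| by rewrite distrC ler_norm.
rewrite /clamp !minEle !maxEle.
case: (leP d a) => ?; case: (leP d b) => ?; case: (leP (- d) d) => ?;
case: (leP (- d) a) => ?; case: (leP (- d) b) => ?;
by rewrite ler_norml; apply/andP; split; lra.
Qed.

Section ContractionInBall.
Variables (R : realType) (X : completeNormedModType R) (f : X -> X) (r q : R).
Hypotheses (r_gt0 : 0 < r) (q_ge0 : 0 <= q) (q_lt1 : q < 1)
  (f_ball : forall x, `|x| <= r -> `|f x| <= r)
  (f_contract : forall x y, `|x| <= r -> `|y| <= r -> `|f x - f y| <= q * `|x - y|).

Let f_fun : {homo f : x / `|x| <= r >-> `|x| <= r}.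
Proof. exact: f_ball. Qed.

HB.instance Definition _ := isFun.Build X X _ _ f f_fun.

Lemma ball_contraction_fixed_point : exists2 x, `|x| <= r & x = f x.
Proof.
apply: (@banach_fixed_point _ _ _ (f : {fun [set x | `|x| <= r] >-> [set x | `|x| <= r]})).
- exists (NngNum q_ge0); split => // -[x y] [/= xr yr]; exact: f_contract.
- rewrite (_ : [set x | `|x| <= r] = closed_ball 0 r); first exact: closed_ball_closed.
  by apply/seteqP; split => x; rewrite closed_ballE // /closed_ball_ /= sub0r normrN.
- by exists 0; rewrite /= normr0 ltW.
Qed.

End ContractionInBall.

Section FixedPointBranch.
Variables (R : realType) (X : completeNormedModType R) (T : R -> X -> X) (r d L : R).
Hypotheses (r_gt0 : 0 < r) (d_ge0 : 0 <= d) (L_ge0 : 0 <= L)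
  (T_ball : forall e x, `|e| <= d -> `|x| <= r -> `|T e x| <= r)
  (T_contract : forall e x y, `|e| <= d -> `|x| <= r -> `|y| <= r ->
     `|T e x - T e y| <= 2^-1 * `|x - y|)
  (T_lipschitz : forall e e' x, `|e| <= d -> `|e'| <= d -> `|x| <= r ->
     `|T e x - T e' x| <= L * `|e - e'|).

Lemma fixed_point_lipschitz e e' x x' : `|e| <= d -> `|e'| <= d ->
  `|x| <= r -> `|x'| <= r -> x = T e x -> x' = T e' x' ->
  `|x - x'| <= 2 * L * `|e - e'|.
Proof.
move=> ed ed' xr xr' fx fx'.
have : `|x - x'| <= L * `|e - e'| + 2^-1 * `|x - x'|.
  rewrite {1}fx {1}fx' -(subrK (T e x') (T e x)) -addrA addrC.
  apply: le_trans (ler_normD _ _) _.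
  by apply: lerD; [exact: T_lipschitz | exact: T_contract].
lra.
Qed.

Lemma fixed_point_unique e x x' : `|e| <= d -> `|x| <= r -> `|x'| <= r ->
  x = T e x -> x' = T e x' -> x = x'.
Proof.
move=> ed xr xr' fx fx'; apply/subr0_eq/normr0_eq0/eqP; rewrite eq_le normr_ge0 andbT.
by have := fixed_point_lipschitz ed ed xr xr' fx fx'; rewrite subrr normr0 mulr0.
Qed.

(* Fixed points at the clamped parameter give a branch defined, and Lipschitz, on all of R. *)
Lemma continuous_fixed_point_branch : exists y : R -> X,
  [/\ continuous y, forall e, `|y e| <= r & forall e, `|e| <= d -> y e = T e (y e)].
Proof.
have /choice[y0 y0P] : forall e, exists x, `|x| <= r /\ x = T (clamp d e) x.
  move=> e; have [x xr fx] : exists2 x, `|x| <= r & x = T (clamp d e) x.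
    apply: (@ball_contraction_fixed_point _ _ _ r 2^-1) => //.
    - by rewrite invf_lt1 ?ltr1n.
    - by move=> x; apply: T_ball; exact: clamp_le.
    - by move=> x y; apply: T_contract; exact: clamp_le.
  by exists x.
exists y0; split.
- apply: (@lipschitz_continuous _ _ _ _ (2 * L)).
  move=> a b; have [ya fa] := y0P a; have [yb fb] := y0P b.
  apply: le_trans (fixed_point_lipschitz (clamp_le _ d_ge0) (clamp_le _ d_ge0) ya yb fa fb) _.
  by rewrite ler_wpM2l ?mulr_ge0 ?clamp_lipschitz.
- by move=> e; have [] := y0P e.
- by move=> e ed; have [_] := y0P e; rewrite clamp_id.
Qed.

End FixedPointBranch.

Lemma small_perturbation_branch (R : realType) (X : completeNormedModType R)
    (T : R -> X -> X) (K rho : R) :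
  0 < K -> 0 < rho -> T 0 0 = 0 ->
  (forall r e x y, r <= 1 -> `|x| <= r -> `|y| <= r ->
     `|T e x - T e y| <= K * (r + `|e|) * `|x - y|) ->
  (forall e e' x, `|x| <= 1 -> `|T e x - T e' x| <= K * `|e - e'|) ->
  exists (d : R) (y : R -> X), [/\ 0 < d, continuous y, y 0 = 0,
    forall e, `|y e| < rho & forall e, `|e| <= d -> y e = T e (y e)].
Proof.
move=> K_gt0 rho_gt0 T00 T_y T_e.
(* Chosen so that K (r + d) <= 1/2 and r/2 + K d <= r. *)
pose r := Num.min (rho / 2) (Num.min 1 (4 * K)^-1); pose d := r / (4 * K).
have r_gt0 : 0 < r by rewrite !lt_min divr_gt0 // ltr01 invr_gt0 mulr_gt0.
have r_rho : r < rho by rewrite gt_min ltr_pdivrMr // ltr_pMr // ltr1n.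
have r_le1 : r <= 1 by rewrite !ge_min lexx orbT.
have Kr : K * r <= 4^-1.
  have : K * r <= K * (4 * K)^-1 by rewrite ler_pM2l // !ge_min lexx !orbT.
  by rewrite invfM mulrCA mulfV ?gt_eqF // mulr1.
have Kd : K * d = r / 4 by rewrite /d; field; rewrite gt_eqF.
have d_gt0 : 0 < d by rewrite divr_gt0 ?mulr_gt0.
have small e : `|e| <= d -> K * (r + `|e|) <= 2^-1.
  move=> ed; have : K * `|e| <= K * d by rewrite ler_pM2l.
  rewrite mulrDr Kd; lra.
have contract e x y : `|e| <= d -> `|x| <= r -> `|y| <= r ->
    `|T e x - T e y| <= 2^-1 * `|x - y|.
  by move=> ed xr yr; apply: le_trans (T_y r e x y r_le1 xr yr) _; rewrite ler_wpM2r ?small.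
have ball e x : `|e| <= d -> `|x| <= r -> `|T e x| <= r.
  move=> ed xr; rewrite -(subrK (T e 0) (T e x)).
  apply: le_trans (ler_normD _ _) _.
  have h1 := contract e x 0 ed xr; rewrite subr0 normr0 in h1.
  have h2 := T_e e 0 0; rewrite T00 subr0 normr0 subr0 in h2.
  have := h1 (ltW r_gt0); have := h2 ler01; have : K * `|e| <= K * d by rewrite ler_pM2l.
  lra.
have T_e' e e' x : `|e| <= d -> `|e'| <= d -> `|x| <= r -> `|T e x - T e' x| <= K * `|e - e'|.
  by move=> _ _ xr; apply: T_e (le_trans xr r_le1).
have [y [y_cont y_r y_fix]] :=
  continuous_fixed_point_branch r_gt0 (ltW d_gt0) (ltW K_gt0) ball contract T_e'.
have d0 : `|0 : R| <= d by rewrite normr0 ltW.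
exists d, y; split => //.
- apply: (fixed_point_unique contract T_e' d0) => //.
  + by rewrite normr0 ltW.
  + exact: y_fix.
- by move=> e; apply: le_lt_trans (y_r e) r_rho.
Qed.

Section DotProduct.
Variables (R : realType) (n : nat).
Implicit Types (u v w : 'cV[R]_n).

Lemma dotvE u v : dotv u v = (u^T *m v) 0 0.
Proof. by rewrite mxE; apply: eq_bigr => i _; rewrite mxE. Qed.

Lemma dotvC u v : dotv u v = dotv v u.
Proof. by apply: eq_bigr => i _; rewrite mulrC. Qed.

Lemma dotv0l v : dotv 0 v = 0.
Proof. by rewrite /dotv big1 // => i; rewrite mxE mul0r. Qed.

Lemma dotvDl u v w : dotv (u + v) w = dotv u w + dotv v w.
Proof. by rewrite !dotvE linearD mulmxDl mxE. Qed.

Lemma dotvZl a u v : dotv (a *: u) v = a * dotv u v.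
Proof. by rewrite !dotvE linearZ -scalemxAl mxE. Qed.

Lemma dotvBl u v w : dotv (u - v) w = dotv u w - dotv v w.
Proof. by rewrite dotvDl -scaleN1r dotvZl mulN1r. Qed.

Lemma dotv_mulmxl (M : 'M[R]_n) u v : dotv (M *m u) v = dotv u (M^T *m v).
Proof. by rewrite !dotvE trmx_mul mulmxA. Qed.

Lemma dotvv_ge0 u : 0 <= dotv u u.
Proof. by apply: sumr_ge0 => i _; rewrite -expr2 sqr_ge0. Qed.

Lemma dotvv_eq0 u : (dotv u u == 0) = (u == 0).
Proof.
apply/idP/eqP => [/eqP /psumr_eq0P u0 | ->]; last by rewrite dotv0l.
apply/matrixP => i j; rewrite ord1 mxE.
by apply/eqP; rewrite -[_ == 0]orbb -mulf_eq0; apply/eqP/u0 => // k _; rewrite -expr2 sqr_ge0.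
Qed.

Lemma normvZ a u : normv (a *: u) = `|a| * normv u.
Proof. by rewrite /normv dotvZl dotvC dotvZl mulrA -expr2 sqrtrM ?sqr_ge0 // sqrtr_sqr. Qed.

Lemma normv_gt0 u : (0 < normv u) = (u != 0).
Proof. by rewrite sqrtr_gt0 lt_def dotvv_ge0 dotvv_eq0 andbT. Qed.

Lemma continuous_normv : continuous (@normv R n).
Proof.
have dot_cont : continuous (fun u : 'cV[R]_n => dotv u u).
  apply: continuous_big => [|i _ u]; first exact: add_continuous.
  by apply: continuousM; exact: coord_continuous.
by move=> u; apply: continuous_comp (dot_cont u) (@sqrt_continuous R _).
Qed.

End DotProduct.

Section OrthogonalProjection.
Variables (R : realType) (n : nat) (M : 'M[R]_n) (lam : R) (Q : 'cV[R]_n -> 'cV[R]_n).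
Hypothesis Q_proj : is_orth_proj_ker M lam Q.

Lemma orth_proj_ker_eq x z : in_ker_shift M lam z ->
  (forall v, in_ker_shift M lam v -> dotv (x - z) v = 0) -> Q x = z.
Proof.
move=> z_ker xz_orth; have [Qx_ker xQx_orth] := Q_proj x.
have d_ker : in_ker_shift M lam (Q x - z) by rewrite /in_ker_shift mulmxBr Qx_ker z_ker subrr.
apply/eqP; rewrite -subr_eq0 -dotvv_eq0.
rewrite {1}(_ : Q x - z = (x - z) - (x - Q x)); last first.
  by apply/esym; rewrite opprB addrC addrA subrK.
by rewrite dotvBl xz_orth // xQx_orth // subrr.
Qed.

Lemma orth_projD x y : Q (x + y) = Q x + Q y.
Proof.
have [Qx_ker xQx_orth] := Q_proj x; have [Qy_ker yQy_orth] := Q_proj y.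
apply: orth_proj_ker_eq => [|v v_ker].
  by rewrite /in_ker_shift mulmxDr Qx_ker Qy_ker addr0.
by rewrite opprD addrACA dotvDl xQx_orth // yQy_orth // addr0.
Qed.

Lemma orth_projZ a x : Q (a *: x) = a *: Q x.
Proof.
have [Qx_ker xQx_orth] := Q_proj x.
apply: orth_proj_ker_eq => [|v v_ker].
  by rewrite /in_ker_shift -scalemxAr Qx_ker scaler0.
by rewrite -scalerBr dotvZl xQx_orth // mulr0.
Qed.

Lemma orth_projB x y : Q (x - y) = Q x - Q y.
Proof. by rewrite orth_projD -scaleN1r orth_projZ scaleN1r. Qed.

Lemma orth_proj0 : Q 0 = 0.
Proof. by have := orth_projZ 0 0; rewrite !scale0r. Qed.

Lemma orth_proj_idem x : Q (Q x) = Q x.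
Proof. by apply: orth_proj_ker_eq => [|v _]; [case: (Q_proj x) | rewrite subrr dotv0l]. Qed.

Lemma orth_proj_orth x : (forall v, in_ker_shift M lam v -> dotv x v = 0) -> Q x = 0.
Proof.
by move=> x_orth; apply: orth_proj_ker_eq => [|v /x_orth]; rewrite ?subr0 // /in_ker_shift mulmx0.
Qed.

Lemma orth_proj_resid x : Q (x - Q x) = 0.
Proof. by apply: orth_proj_orth; case: (Q_proj x). Qed.

Lemma orth_proj_range x : Q ((M^T - lam%:M) *m x) = 0.
Proof.
apply: orth_proj_orth => v v_ker.
by rewrite dotv_mulmxl linearB /= trmxK tr_scalar_mx v_ker dotvC dotv0l.
Qed.

Definition orth_proj_mx : 'M[R]_n := \matrix_(i, j) Q (delta_mx j 0) i 0.

Lemma orth_proj_mxE x : orth_proj_mx *m x = Q x.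
Proof.
have -> : Q x = Q (\sum_(j < n) x j 0 *: delta_mx j 0).
  congr Q; apply/matrixP => i k; rewrite ord1 summxE (bigD1 i) //= big1 ?addr0 => [|j ji].
    by rewrite !mxE !eqxx mulr1.
  by rewrite !mxE eq_sym (negbTE ji) mulr0.
rewrite (big_morph Q orth_projD orth_proj0).
apply/matrixP => i k; rewrite ord1 mxE summxE; apply: eq_bigr => j _.
by rewrite orth_projZ !mxE mulrC.
Qed.

End OrthogonalProjection.

Lemma unitmx_inj (F : fieldType) m (M : 'M[F]_m) :
  (forall y : 'cV_m, M *m y = 0 -> y = 0) -> M \in unitmx.
Proof.
move=> M_inj; rewrite -unitmx_tr -row_free_unit; apply: inj_row_free => v vM0.
by apply: trmx_inj; rewrite trmx0; apply: M_inj; rewrite -[M]trmxK -trmx_mul vM0 trmx0.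
Qed.

(* Joins the completeness of real matrices with their normed-module structure, so that the
   contraction principle applies to column vectors. *)
HB.instance Definition _ (R : realType) (m n : nat) := Complete.on 'M[R]_(m, n).

Section MatrixNorm.
Variable R : realType.

Lemma mx_norm_entry_le p q (M : 'M[R]_(p, q)) i j : `|M i j| <= `|M|.
Proof. by rewrite [leRHS]/Num.Def.normr /= mx_normrE; apply/bigmax_geP; right; exists (i, j). Qed.

Lemma mx_norm_le_entries p q (M : 'M[R]_(p, q)) b :
  0 <= b -> (forall i j, `|M i j| <= b) -> `|M| <= b.
Proof.
by move=> b0 Mb; rewrite [leLHS]/Num.Def.normr /= mx_normrE; apply: bigmax_le => // -[i j] _.
Qed.

Lemma mx_norm_mulmx_le p q (M : 'M[R]_(p, q)) (v : 'cV[R]_q) : `|M *m v| <= q%:R * `|M| * `|v|.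
Proof.
apply: mx_norm_le_entries => [|i j]; first by rewrite !mulr_ge0.
rewrite mxE (le_trans (ler_norm_sum _ _ _)) //.
apply: le_trans (_ : \sum_(k < q) `|M| * `|v| <= _).
  by apply: ler_sum => k _; rewrite normrM ler_pM // ?mx_norm_entry_le.
by rewrite sumr_const card_ord -mulrA mulr_natl.
Qed.

Lemma scale_sub_le (V : normedModType R) (a b : R) (u v : V) :
  `|a *: u - b *: v| <= `|a - b| * `|u| + `|b| * `|u - v|.
Proof.
rewrite (_ : a *: u - b *: v = (a - b) *: u + b *: (u - v)); last first.
  by rewrite scalerBl scalerBr addrA subrK.
by apply: le_trans (ler_normD _ _) _; rewrite !normrZ.
Qed.

(* y : 'cV_(m + 1) encodes a pair (x, c) of a vector x : 'cV_m and a scalar c. *)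
Definition xpart m (y : 'cV[R]_(m + 1)) : 'cV[R]_m := usubmx y.
Definition cpart m (y : 'cV[R]_(m + 1)) : R := dsubmx y 0 0.

Lemma xpart_norm m (y : 'cV[R]_(m + 1)) : `|xpart y| <= `|y|.
Proof. by apply: mx_norm_le_entries => // i j; rewrite mxE mx_norm_entry_le. Qed.

Lemma cpart_norm m (y : 'cV[R]_(m + 1)) : `|cpart y| <= `|y|.
Proof. by rewrite /cpart mxE mx_norm_entry_le. Qed.

Lemma xpartB m (y y' : 'cV[R]_(m + 1)) : xpart (y - y') = xpart y - xpart y'.
Proof. exact: linearB. Qed.

Lemma cpartB m (y y' : 'cV[R]_(m + 1)) : cpart (y - y') = cpart y - cpart y'.
Proof. by rewrite /cpart linearB !mxE. Qed.

Lemma continuous_xpart m : continuous (@xpart m).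
Proof. by apply: (@lipschitz_continuous _ _ _ _ 1) => a b; rewrite mul1r -xpartB xpart_norm. Qed.

Lemma continuous_cpart m : continuous (@cpart m).
Proof. by apply: (@lipschitz_continuous _ _ _ _ 1) => a b; rewrite mul1r -cpartB cpart_norm. Qed.

Lemma xpart_cpartK m (y : 'cV[R]_(m + 1)) : col_mx (xpart y) (cpart y)%:M = y.
Proof. by rewrite /cpart -mx11_scalar vsubmxK. Qed.

Lemma col_mx0_norm m (v : 'cV[R]_m) : `|col_mx v (0 : 'cV[R]_1)| = `|v|.
Proof.
apply/eqP; rewrite eq_le; apply/andP; split.
  apply: mx_norm_le_entries => // i j; rewrite mxE.
  case: splitP => k _; rewrite ?mx_norm_entry_le //.
  by rewrite mxE normr0.
by apply: mx_norm_le_entries => // i j; rewrite -(col_mxEu v (0 : 'cV[R]_1)) mx_norm_entry_le.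
Qed.

End MatrixNorm.

Lemma absv_Xi (R : realType) n (u x : 'cV[R]_n) :
  (forall i, `|x i 0| < `|u i 0|) -> absv (u + x) = Xi u *m (u + x).
Proof.
move=> x_small; apply/matrixP => i j; rewrite ord1 mul_diag_mx !mxE.
have := x_small i; rewrite ltr_norml => /andP[lo hi].
case: (ltrgt0P (u i 0)) => [u_gt0|u_lt0|u_eq0].
- rewrite gtr0_norm // in lo hi; rewrite gtr0_sg // mul1r gtr0_norm //; lra.
- rewrite ltr0_norm // in lo hi; rewrite ltr0_sg // mulN1r ltr0_norm //; lra.
- by move: lo hi; rewrite u_eq0 normr0; lra.
Qed.

Lemma add_dominated_eq0 (R : realType) n (u x : 'cV[R]_n) :
  (forall i, `|x i 0| < `|u i 0|) -> u + x = 0 -> u = 0.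
Proof.
move=> x_small /eqP; rewrite addr_eq0 => /eqP x_eq; apply/matrixP => i j.
by have := x_small i; rewrite x_eq mxE normrN ltxx.
Qed.

Section Normalization.
Variables (R : realType) (n : nat).
Implicit Types (v : 'cV[R]_n).

Lemma absvZ a v : absv (a *: v) = `|a| *: absv v.
Proof. by apply/matrixP => i j; rewrite !mxE normrM. Qed.

Lemma fucik_eqZ (M : 'M[R]_n) (e h a : R) v : 0 <= a ->
  M *m v = e *: (absv v + h *: v) ->
  M *m (a *: v) = e *: (absv (a *: v) + h *: (a *: v)).
Proof.
move=> a_ge0 Mv; rewrite -scalemxAr Mv absvZ ger0_norm //.
by apply/matrixP => i j; rewrite !mxE; ring.
Qed.

Lemma normv_normalize v : v != 0 -> normv ((normv v)^-1 *: v) = 1.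
Proof.
by rewrite -normv_gt0 => v_gt0; rewrite normvZ ger0_norm ?invr_ge0 ?ltW // mulVf ?gt_eqF.
Qed.

Lemma continuous_normalize (f : R -> 'cV[R]_n) : continuous f -> (forall e, f e != 0) ->
  continuous (fun e => (normv (f e))^-1 *: f e).
Proof.
move=> f_cont f_neq0 e; apply: continuousZ (f_cont e).
apply: continuousV; first by rewrite gt_eqF // normv_gt0.
apply: (continuous_comp (f_cont e)). exact: continuous_normv.
Qed.

End Normalization.

Section LyapunovSchmidt.
Variables (R : realType) (n : nat) (A : 'M[R]_n) (lam : R)
  (Q : 'cV[R]_n -> 'cV[R]_n) (u0 : 'cV[R]_n) (eta0 : R).
Hypotheses (Q_proj : is_orth_proj_ker A^T lam Q) (u0_ker : in_ker_shift A lam u0)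
  (u0_neq0 : forall i, u0 i 0 != 0)
  (eta0_orth : forall v, in_ker_shift A^T lam v -> dotv (absv u0 + eta0 *: u0) v = 0)
  (nondeg : forall (c : R) (w : 'cV[R]_n), in_ker_shift A lam w -> dotv u0 w = 0 ->
      Q (Xi u0 *m w + eta0 *: w) + c *: Q u0 = 0 -> w = 0 /\ c = 0).

Local Notation S := (Xi u0).
Local Notation P := (orth_proj_mx Q).

Let QD := orth_projD Q_proj.
Let QZ := orth_projZ Q_proj.
Let QQ := orth_proj_idem Q_proj.
Let Q0 := orth_proj0 Q_proj.
Let PE := orth_proj_mxE Q_proj.

Lemma orth_proj_shift x : Q ((A - lam%:M) *m x) = 0.
Proof. by have := orth_proj_range Q_proj x; rewrite trmxK. Qed.

Lemma absv_u0 : absv u0 = S *m u0.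
Proof.
rewrite -[u0 in LHS]addr0 absv_Xi ?addr0 // => i.
by rewrite mxE normr0 normr_gt0.
Qed.

Lemma orth_proj_base : Q (S *m u0 + eta0 *: u0) = 0.
Proof. by apply: (orth_proj_orth Q_proj) => v; rewrite -absv_u0; exact: eta0_orth. Qed.

(* The linearisation at y = 0 of the reduced problem below. *)
Definition bordered_mx : 'M[R]_(n + 1) :=
  block_mx (A - lam%:M + P *m (S + eta0%:M)) (P *m u0) u0^T 0.

Lemma bordered_mxE y : bordered_mx *m y =
  col_mx ((A - lam%:M) *m xpart y + Q (S *m xpart y + eta0 *: xpart y) + cpart y *: Q u0)
         (u0^T *m xpart y).
Proof.
rewrite -{1}(xpart_cpartK y) mul_block_col mul0mx addr0 mulmxDl -!mulmxA !PE.
by rewrite [(S + _) *m _]mulmxDl mul_scalar_mx mul_mx_scalar QZ.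
Qed.

Lemma bordered_mx_unit : bordered_mx \in unitmx.
Proof.
apply: unitmx_inj => y; rewrite bordered_mxE -[0]col_mx0 => /eq_col_mx[top bot].
have xy_orth : dotv u0 (xpart y) = 0 by rewrite dotvE bot mxE.
have cy_eq : Q (S *m xpart y + eta0 *: xpart y) + cpart y *: Q u0 = 0.
  by have := congr1 Q top; rewrite QD QD orth_proj_shift add0r QQ QZ QQ Q0.
have xy_ker : in_ker_shift A lam (xpart y) by move: top; rewrite -addrA cy_eq addr0.
have [x0 c0] := nondeg xy_ker xy_orth cy_eq.
by rewrite -{1}(xpart_cpartK y) x0 c0 raddf0.
Qed.

(* With u = u0 + x and eta = eta0 + c, y = fixmap e y says that J y = - (remainder e y, 0),
   where J = bordered_mx and lin_rhs y = Xi(u0) u + eta u is |u| + eta u while x is small. *)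
Definition lin_rhs y : 'cV[R]_n := S *m (u0 + xpart y) + (eta0 + cpart y) *: (u0 + xpart y).

Definition remainder e y : 'cV[R]_n :=
  cpart y *: Q (xpart y) - e *: (lin_rhs y - Q (lin_rhs y)).

Definition fixmap e y : 'cV[R]_(n + 1) := - (invmx bordered_mx *m col_mx (remainder e y) 0).

Lemma fixmap_solution e y : y = fixmap e y ->
  (A - lam%:M) *m (u0 + xpart y) = e *: lin_rhs y.
Proof.
move=> y_fix.
have : bordered_mx *m y = col_mx (- remainder e y) 0.
  by rewrite {1}y_fix mulmxN mulKVmx ?bordered_mx_unit // opp_col_mx oppr0.
rewrite bordered_mxE => /eq_col_mx[top _].
have Qw : Q (lin_rhs y) =
    Q (S *m xpart y + eta0 *: xpart y) + cpart y *: Q u0 + cpart y *: Q (xpart y).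
  rewrite (_ : lin_rhs y = (S *m u0 + eta0 *: u0) + (S *m xpart y + eta0 *: xpart y)
      + cpart y *: u0 + cpart y *: xpart y); last first.
    by rewrite /lin_rhs mulmxDr; apply/matrixP => i j; rewrite !mxE; ring.
  by rewrite QD QD QD orth_proj_base add0r !QZ.
have eq1 : (A - lam%:M) *m xpart y + Q (lin_rhs y) = e *: (lin_rhs y - Q (lin_rhs y)).
  by move: top; rewrite {1}Qw /remainder !addrA => ->; rewrite opprB subrK.
(* Q kills both the range of A - lam and that of I - Q. *)
have Qw0 : Q (lin_rhs y) = 0.
  by have := congr1 Q eq1; rewrite QD orth_proj_shift add0r QQ QZ (orth_proj_resid Q_proj) scaler0.
by move: eq1; rewrite Qw0 addr0 subr0 mulmxDr u0_ker add0r.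
Qed.

(* Dominates every operator norm in the estimates; the matrix norm is the max-entry norm,
   whence the dimension factors. *)
Let C : R := 1 + n%:R * `|P| + n%:R * `|S| + (n + 1)%:R * `|invmx bordered_mx|
  + `|u0| + `|eta0|.

Let C_parts : [/\ 0 <= n%:R * `|P|, 0 <= n%:R * `|S|,
  0 <= (n + 1)%:R * `|invmx bordered_mx|, 0 <= `|u0| & 0 <= `|eta0|].
Proof. by split; rewrite ?mulr_ge0. Qed.

Let C_ge1 : 1 <= C. Proof. by case: C_parts; rewrite /C; lra. Qed.
Let C_ge0 : 0 <= C. Proof. by case: C_parts; rewrite /C; lra. Qed.
Let u0_le : `|u0| <= C. Proof. by case: C_parts; rewrite /C; lra. Qed.
Let eta0_le : `|eta0| <= C. Proof. by case: C_parts; rewrite /C; lra. Qed.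

Let mulmx_le p q (M : 'M[R]_(p, q)) (v : 'cV[R]_q) :
  q%:R * `|M| <= C -> `|M *m v| <= C * `|v|.
Proof. by move=> MC; apply: le_trans (mx_norm_mulmx_le M v) _; rewrite ler_wpM2r. Qed.

Let Q_le v : `|Q v| <= C * `|v|.
Proof. by rewrite -PE; apply: mulmx_le; case: C_parts; rewrite /C; lra. Qed.

Let S_le (v : 'cV[R]_n) : `|S *m v| <= C * `|v|.
Proof. by apply: mulmx_le; case: C_parts; rewrite /C; lra. Qed.

Let Jinv_le (z : 'cV[R]_(n + 1)) : `|invmx bordered_mx *m z| <= C * `|z|.
Proof. by apply: mulmx_le; case: C_parts; rewrite /C; lra. Qed.

Let resid_le (v : 'cV[R]_n) : `|v - Q v| <= 2 * C * `|v|.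
Proof.
have := ler_wpM2r (normr_ge0 v) C_ge1; rewrite mul1r => vC.
by apply: le_trans (ler_normB _ _) _; have := Q_le v; lra.
Qed.

Let add_le (V : normedModType R) (a b : V) : `|a| <= C -> `|b| <= 1 -> `|a + b| <= 2 * C.
Proof. by move=> aC b1; apply: le_trans (ler_normD _ _) _; have := C_ge1; lra. Qed.

Let lin_rhs_le y : `|y| <= 1 -> `|lin_rhs y| <= 6 * (C * C).
Proof.
move=> y1; have x1 := le_trans (xpart_norm y) y1; have c1 := le_trans (cpart_norm y) y1.
have u_le := add_le u0_le x1; have eta_le := add_le eta0_le c1.
apply: le_trans (ler_normD _ _) _; rewrite normrZ.
have := S_le (u0 + xpart y); have := ler_pM (normr_ge0 _) (normr_ge0 _) eta_le u_le.
have := ler_wpM2l C_ge0 u_le; lra.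
Qed.

Let lin_rhs_lipschitz y y' : `|y| <= 1 -> `|y'| <= 1 ->
  `|lin_rhs y - lin_rhs y'| <= 5 * C * `|y - y'|.
Proof.
move=> y1 y1'; set D := `|y - y'|.
have dx : `|xpart y - xpart y'| <= D by rewrite -xpartB xpart_norm.
have dc : `|cpart y - cpart y'| <= D by rewrite -cpartB cpart_norm.
have u_le := add_le u0_le (le_trans (xpart_norm y) y1).
have eta_le := add_le eta0_le (le_trans (cpart_norm y') y1').
rewrite (_ : lin_rhs y - lin_rhs y' = S *m (xpart y - xpart y')
    + ((eta0 + cpart y) *: (u0 + xpart y) - (eta0 + cpart y') *: (u0 + xpart y'))); last first.
  rewrite /lin_rhs mulmxBr !mulmxDr.
  move: (S *m u0) (S *m xpart y) (S *m xpart y') => a b b'.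
  by apply/matrixP => i j; rewrite !mxE; ring.
apply: le_trans (ler_normD _ _) _; apply: le_trans (lerD (S_le _) (scale_sub_le _ _ _ _)) _.
rewrite opprD addrACA subrr add0r opprD addrACA subrr add0r.
have := ler_wpM2l C_ge0 dx; have := ler_pM (normr_ge0 _) (normr_ge0 _) dc u_le.
have := ler_pM (normr_ge0 _) (normr_ge0 _) eta_le dx; lra.
Qed.

Let remainder_lipschitz r e y y' : r <= 1 -> `|y| <= r -> `|y'| <= r ->
  `|remainder e y - remainder e y'| <= 10 * (C * C) * (r + `|e|) * `|y - y'|.
Proof.
move=> r1 yr yr'; set D := `|y - y'|.
have dx : `|xpart y - xpart y'| <= D by rewrite -xpartB xpart_norm.
have dc : `|cpart y - cpart y'| <= D by rewrite -cpartB cpart_norm.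
have Qx_le : `|Q (xpart y)| <= C * r.
  by apply: le_trans (Q_le _) _; rewrite ler_wpM2l // (le_trans (xpart_norm _)).
have c_le : `|cpart y'| <= r by rewrite (le_trans (cpart_norm _)).
have dQx : `|Q (xpart y) - Q (xpart y')| <= C * D.
  by rewrite -(orth_projB Q_proj); apply: le_trans (Q_le _) _; rewrite ler_wpM2l.
have dw : `|(lin_rhs y - lin_rhs y') - Q (lin_rhs y - lin_rhs y')| <= 2 * C * (5 * C * D).
  apply: le_trans (resid_le _) _; rewrite ler_wpM2l ?mulr_ge0 //.
  by apply: lin_rhs_lipschitz; lra.
rewrite (_ : remainder e y - remainder e y' = (cpart y *: Q (xpart y) - cpart y' *: Q (xpart y'))
    - e *: ((lin_rhs y - lin_rhs y') - Q (lin_rhs y - lin_rhs y'))); last first.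
  rewrite /remainder (orth_projB Q_proj).
  move: (Q (xpart y)) (Q (xpart y')) (lin_rhs y) (lin_rhs y') (Q (lin_rhs y)) (Q (lin_rhs y')).
  by move=> a a' b b' d d'; apply/matrixP => i j; rewrite !mxE; ring.
apply: le_trans (ler_normB _ _) _; rewrite normrZ.
apply: le_trans (lerD (scale_sub_le _ _ _ _) (lexx _)) _.
have := ler_pM (normr_ge0 _) (normr_ge0 _) dc Qx_le.
have := ler_pM (normr_ge0 _) (normr_ge0 _) c_le dQx.
have := ler_wpM2l (normr_ge0 e) dw.
have r_ge0 : 0 <= r := le_trans (normr_ge0 y) yr.
have : 2 * C * (r * D) <= 10 * (C * C) * (r * D).
  by apply: ler_wpM2r; [exact: mulr_ge0 r_ge0 (normr_ge0 _) | have := C_ge1; nra].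
lra.
Qed.

Let remainder_lipschitz_param e e' y : `|y| <= 1 ->
  `|remainder e y - remainder e' y| <= 12 * (C * (C * C)) * `|e - e'|.
Proof.
move=> y1; rewrite (_ : remainder e y - remainder e' y =
    - ((e - e') *: (lin_rhs y - Q (lin_rhs y)))); last first.
  by rewrite /remainder opprB addrC addrA subrK scalerBl opprB.
rewrite normrN normrZ mulrC ler_wpM2r //.
apply: le_trans (resid_le _) _.
rewrite (_ : 12 * (C * (C * C)) = 2 * C * (6 * (C * C))); last by ring.
by rewrite ler_wpM2l ?mulr_ge0 ?lin_rhs_le.
Qed.

Let fixmap_sub e e' y y' :
  `|fixmap e y - fixmap e' y'| <= C * `|remainder e y - remainder e' y'|.
Proof.
rewrite /fixmap opprK addrC -mulmxBr.
rewrite (_ : col_mx _ _ - _ = col_mx (remainder e' y' - remainder e y) 0).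
  by apply: le_trans (Jinv_le _) _; rewrite col_mx0_norm distrC.
by apply/matrixP => i j; rewrite !mxE; case: splitP => k _; rewrite !mxE ?subrr.
Qed.

Lemma fixmap00 : fixmap 0 0 = 0.
Proof.
by rewrite /fixmap /remainder /cpart linear0 mxE !scale0r subrr col_mx0 mulmx0 oppr0.
Qed.

Lemma fixmap_branch : exists (d : R) (y : R -> 'cV[R]_(n + 1)),
  [/\ 0 < d, continuous y, y 0 = 0,
      forall e i, `|xpart (y e) i 0| < `|u0 i 0| &
      forall e, `|e| <= d -> y e = fixmap e (y e)].
Proof.
pose rho := \big[Num.min/1]_i `|u0 i 0|.
have rho_gt0 : 0 < rho by apply: lt_bigmin => // i _; rewrite normr_gt0.
have C_gt0 : 0 < C by apply: lt_le_trans C_ge1.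
pose K := 12 * C * (C * (C * C)).
have C3K : 10 * (C * (C * C)) <= K.
  by apply: ler_wpM2r; [rewrite !mulr_ge0 | have := C_ge1; lra].
have [|r e y y' r1 yr yr'|e e' y y1|d [y [d_gt0 y_cont y0 y_small y_fix]]] :=
  small_perturbation_branch (T := fixmap) (K := K) _ rho_gt0 fixmap00.
- by rewrite /K !mulr_gt0.
- apply: le_trans (fixmap_sub _ _ _ _) _.
  have := ler_wpM2l C_ge0 (remainder_lipschitz e r1 yr yr').
  have rD : 0 <= (r + `|e|) * `|y - y'|.
    by rewrite mulr_ge0 ?addr_ge0 // (le_trans (normr_ge0 y) yr).
  have := ler_wpM2r rD C3K; lra.
- apply: le_trans (fixmap_sub _ _ _ _) _.
  by have := ler_wpM2l C_ge0 (remainder_lipschitz_param e e' y1); rewrite /K; lra.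
exists d, y; split => // e i.
apply: le_lt_trans (mx_norm_entry_le _ i 0) _; apply: le_lt_trans (xpart_norm _) _.
by apply: lt_le_trans (y_small e) _; exact: bigmin_le.
Qed.

End LyapunovSchmidt.

Theorem theorem3 (R : realType) (n : nat) (A : 'M[R]_n) (lam : R)
  (Q : 'cV[R]_n -> 'cV[R]_n) (u0 : 'cV[R]_n) (eta0 : R) :
  (exists v : 'cV[R]_n, v != 0 /\ A *m v = lam *: v) ->
  is_orth_proj_ker A^T lam Q ->
  in_ker_shift A lam u0 ->
  normv u0 = 1 ->
  (forall i, u0 i 0 != 0) ->
  (forall v, in_ker_shift A^T lam v -> dotv (absv u0 + eta0 *: u0) v = 0) ->
  (forall (c : R) (w : 'cV[R]_n), in_ker_shift A lam w -> dotv u0 w = 0 ->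
      Q (Xi u0 *m w + eta0 *: w) + c *: Q u0 = 0 -> w = 0 /\ c = 0) ->
  exists (E : set R) (eta : R -> R) (u : R -> 'cV[R]_n),
    nbhs (0 : R) E /\
    {within E, continuous eta} /\ {within E, continuous u} /\
    u 0 = u0 /\ eta 0 = eta0 /\
    (forall eps, E eps ->
       (A - lam%:M) *m u eps = eps *: (absv (u eps) + eta eps *: u eps) /\
       normv (u eps) = 1).
Proof.
move=> _ Q_proj u0_ker u0_norm u0_neq0 eta0_orth nondeg.
have [d [y [d_gt0 y_cont y0 y_small y_fix]]] := fixmap_branch eta0 Q_proj u0_neq0.
have x_cont : continuous (fun e => xpart (y e)).
  by move=> e; apply: continuous_comp (y_cont e) _; exact: continuous_xpart.
have c_cont : continuous (fun e => cpart (y e)).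
  by move=> e; apply: continuous_comp (y_cont e) _; exact: continuous_cpart.
pose v e := u0 + xpart (y e).
have v_cont : continuous v.
  by move=> e; apply: (@continuousD _ _ _ (cst u0)) (x_cont e); exact: cst_continuous.
have v_neq0 e : v e != 0.
  apply/eqP => /(add_dominated_eq0 (y_small e)) /eqP.
  by apply/negP; rewrite -normv_gt0 u0_norm ltr01.
exists (ball 0 d), (fun e => eta0 + cpart (y e)), (fun e => (normv (v e))^-1 *: v e).
split; first exact: nbhsx_ballx.
split.
  apply: continuous_subspaceT => e.
  by apply: (@continuousD _ _ _ (cst eta0)) (c_cont e); exact: cst_continuous.
split; first exact/continuous_subspaceT/continuous_normalize.
split; first by rewrite /v y0 /xpart linear0 addr0 u0_norm invr1 scale1r.
split; first by rewrite y0 /cpart linear0 mxE addr0.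
move=> e; rewrite -ball_normE /= sub0r normrN => /ltW e_le_d.
have := fixmap_solution Q_proj u0_ker u0_neq0 eta0_orth nondeg (y_fix e e_le_d).
rewrite /lin_rhs -absv_Xi // => sol.
by split; [apply: fucik_eqZ; rewrite // invr_ge0 ltW ?normv_gt0 | exact: normv_normalize].
Qed.
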